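(* Let $P$ be a projection algebra. If $p_1,\dots,p_k,q_1,\dots,q_l\in P$ satisfy $p_1\,\mathscr F\,p_2\,\mathscr F\cdots\mathscr F\,p_k$ and $q_1\,\mathscr F\,q_2\,\mathscr F\cdots\mathscr F\,q_l$, then $\theta_{p_1}\cdots\theta_{p_k}=\theta_{q_1}\cdots\theta_{q_l}$ implies $p_k=q_l$, and $\delta_{p_k}\cdots\delta_{p_1}=\delta_{q_l}\cdots\delta_{q_1}$ implies $p_1=q_1$.
   Context: Maps are written to the right of their arguments and composed left to right. A projection algebra is a set $P$ with maps $\theta_p,\delta_p:P\to P$ ($p\in P$) such that for all $p,q\in P$: $p\theta_p=p$, $p\delta_p=p$; $p\theta_{q\theta_p}=q\theta_p$, $p\delta_{q\delta_p}=q\delta_p$; $\theta_q\theta_{q\theta_p}=\theta_q\theta_p$, $\delta_q\delta_{q\delta_p}=\delta_q\delta_p$; $\theta_p\delta_p=\theta_p$, $\delta_p\theta_p=\delta_p$; $\theta_{p\delta_q}\theta_p=\theta_q\theta_p$, $\delta_{p\theta_q}\delta_p=\delta_q\delta_p$. The relation $p\,\mathscr F\,q$ means $p=q\delta_p$ and $q=p\theta_q$. *)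

From Stdlib Require Import List.
Import ListNotations.

(* Maps are written on the right and composed left to right.
   [theta p x] stands for  x θ_p  and [delta p x] for  x δ_p. *)
Record ProjAlg : Type := {
  carrier :> Type;
  theta : carrier -> carrier -> carrier;
  delta : carrier -> carrier -> carrier;
  ax_theta_id : forall p, theta p p = p;
  ax_delta_id : forall p, delta p p = p;
  ax_theta_2 : forall p q, theta (theta p q) p = theta p q;
  ax_delta_2 : forall p q, delta (delta p q) p = delta p q;
  ax_theta_3 : forall p q x, theta (theta p q) (theta q x) = theta p (theta q x);
  ax_delta_3 : forall p q x, delta (delta p q) (delta q x) = delta p (delta q x);
  ax_td : forall p x, delta p (theta p x) = theta p x;
  ax_dt : forall p x, theta p (delta p x) = delta p x;
  ax_theta_5 : forall p q x, theta p (theta (delta q p) x) = theta p (theta q x);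
  ax_delta_5 : forall p q x, delta p (delta (theta q p) x) = delta p (delta q x)
}.

Section Defs.
Variable P : ProjAlg.

Definition relF (p q : P) : Prop := p = delta P p q /\ q = theta P q p.

Fixpoint Fchain (p : P) (ps : list P) : Prop :=
  match ps with
  | [] => True
  | q :: qs => relF p q /\ Fchain q qs
  end.

(* θ_{p_1} θ_{p_2} ... θ_{p_k}  (first apply θ_{p_1}, then θ_{p_2}, ...) *)
Definition theta_word (ps : list P) : P -> P :=
  fun x => fold_left (fun y p => theta P p y) ps x.
Definition delta_word (ps : list P) : P -> P :=
  fun x => fold_left (fun y p => delta P p y) ps x.
End Defs.

From Stdlib Require Import List.
Import ListNotations.

(* Along an F-chain p_1 F ... F p_k the word θ_{p_1}...θ_{p_k} sends p_1 to p_k, and its image is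
   fixed by θ_{p_k}.  If two chain words agree, each last element is therefore fixed by the other's
   θ, and the axiom p θ_{q θ_p} = q θ_p forces them to coincide.  Dually, the reversed δ-word sends
   p_k to p_1 and has image fixed by δ_{p_1}. *)

Lemma last_cons {A : Type} (q p : A) (qs : list A) : last (q :: qs) p = last qs q.
Proof.
  revert q p; induction qs as [|a qs IH]; intros q p; [reflexivity|].
  change (last (a :: qs) p = last (a :: qs) q). now rewrite !IH.
Qed.

Section ProjectionAlgebra.
Variable P : ProjAlg.

Lemma theta_idem (p x : P) : theta P p (theta P p x) = theta P p x.
Proof. rewrite <- (ax_td P p x) at 1. rewrite ax_dt. apply ax_td. Qed.

Lemma delta_idem (p x : P) : delta P p (delta P p x) = delta P p x.
Proof. rewrite <- (ax_dt P p x) at 1. rewrite ax_td. apply ax_dt. Qed.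

Lemma theta_antisym (p q : P) : theta P q p = p -> theta P p q = q -> p = q.
Proof.
  intros Hp Hq. pose proof (ax_theta_2 P p q) as E.
  rewrite Hq, Hp in E. exact E.
Qed.

Lemma delta_antisym (p q : P) : delta P q p = p -> delta P p q = q -> p = q.
Proof.
  intros Hp Hq. pose proof (ax_delta_2 P p q) as E.
  rewrite Hq, Hp in E. exact E.
Qed.

Lemma theta_word_cons (p : P) (ps : list P) (x : P) :
  theta_word P (p :: ps) x = theta_word P ps (theta P p x).
Proof. reflexivity. Qed.

Lemma delta_word_snoc (ps : list P) (p x : P) :
  delta_word P (ps ++ [p]) x = delta P p (delta_word P ps x).
Proof. unfold delta_word. now rewrite fold_left_app. Qed.

Lemma theta_word_Fchain (p : P) (ps : list P) :
  Fchain P p ps -> theta_word P (p :: ps) p = last ps p.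
Proof.
  rewrite theta_word_cons, ax_theta_id.
  revert p; induction ps as [|q qs IH]; intros p Hchain; [reflexivity|].
  destruct Hchain as [[_ Hq] Hchain].
  rewrite theta_word_cons, <- Hq, last_cons. now apply IH.
Qed.

Lemma theta_word_fixed (p : P) (ps : list P) (x : P) :
  theta P (last ps p) (theta_word P (p :: ps) x) = theta_word P (p :: ps) x.
Proof.
  revert p x; induction ps as [|q qs IH]; intros p x.
  - apply theta_idem.
  - rewrite last_cons, theta_word_cons. apply IH.
Qed.

Lemma delta_word_rev_Fchain (p : P) (ps : list P) :
  Fchain P p ps -> delta_word P (rev (p :: ps)) (last ps p) = p.
Proof.
  revert p; induction ps as [|q qs IH]; intros p Hchain.
  - apply ax_delta_id.
  - destruct Hchain as [[Hp _] Hchain].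
    change (rev (p :: q :: qs)) with (rev (q :: qs) ++ [p]).
    rewrite delta_word_snoc, last_cons, IH by exact Hchain.
    now symmetry.
Qed.

Lemma delta_word_rev_fixed (p : P) (ps : list P) (x : P) :
  delta P p (delta_word P (rev (p :: ps)) x) = delta_word P (rev (p :: ps)) x.
Proof.
  change (rev (p :: ps)) with (rev ps ++ [p]).
  rewrite delta_word_snoc. apply delta_idem.
Qed.

End ProjectionAlgebra.

Theorem lemma4p14 (P : ProjAlg) (p1 : P) (ps : list P) (q1 : P) (qs : list P) :
  Fchain P p1 ps -> Fchain P q1 qs ->
  ((forall x : P, theta_word P (p1 :: ps) x = theta_word P (q1 :: qs) x) ->
     last ps p1 = last qs q1) /\
  ((forall x : P, delta_word P (rev (p1 :: ps)) x = delta_word P (rev (q1 :: qs)) x) ->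
     p1 = q1).
Proof.
  intros Hp Hq. split; intros Hw.
  - apply theta_antisym.
    + rewrite <- (theta_word_Fchain P p1 ps Hp), Hw. apply theta_word_fixed.
    + rewrite <- (theta_word_Fchain P q1 qs Hq), <- Hw. apply theta_word_fixed.
  - apply delta_antisym.
    + rewrite <- (delta_word_rev_Fchain P p1 ps Hp), Hw. apply delta_word_rev_fixed.
    + rewrite <- (delta_word_rev_Fchain P q1 qs Hq), <- Hw. apply delta_word_rev_fixed.
Qed.
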